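(* Let $\mathbf{L}$ be an intermediate propositional logic with $\vdash_{\mathbf{L}}\lnot A\lor\lnot\lnot A$. Then for every derivation $\pi$ in $\varepsilon\tau(\mathbf{L})$ whose end formula is a negation $\lnot D$, every critical $\varepsilon\tau$-term $e$ of $\pi$ has a complete $e$-elimination set.
   Context: Intermediate propositional logic: contains intuitionistic, contained in classical propositional logic, closed under modus ponens and substitution. $\varepsilon\tau$-terms: $\varepsilon x\,A(x)$, $\tau x\,A(x)$. Critical formulas: $A(t)\to A(\varepsilon x\,A(x))$ (belonging to $\varepsilon x\,A(x)$) and $A(\tau x\,A(x))\to A(t)$ (belonging to $\tau x\,A(x)$). A derivation $\pi$ in $\varepsilon\tau(\mathbf{L})$ is a derivation in the quantifier-free language with $\varepsilon\tau$-terms from a finite set of critical formulas using substitution instances of theorems of $\mathbf{L}$ and modus ponens; $e$ is a critical term of $\pi$ if a critical formula used in $\pi$ belongs to $e$. Write the critical formulas of $\pi$ as $\Gamma\cup\Lambda(e)$, $\Lambda(e)$ those belonging to $e$, and the end formula as $D'(e)$. $\{s_1,\dots,s_k\}$ is a complete $e$-elimination set if $\Gamma[s_1/e],\dots,\Gamma[s_k/e]\vdash_{\mathbf{L}}D'(s_1)\lor\dots\lor D'(s_k)$, where $[s/e]$ replaces every occurrence of $e$ by $s$ and $\vdash_{\mathbf{L}}$ is derivability from assumptions by substitution instances of theorems of $\mathbf{L}$ and modus ponens. *)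

From Stdlib Require Import List Arith ClassicalEpsilon.
Import ListNotations.
Set Implicit Arguments.

Inductive pform : Type :=
| PVar : nat -> pform
| PBot : pform
| PAnd : pform -> pform -> pform
| POr  : pform -> pform -> pform
| PImp : pform -> pform -> pform.

Definition PNeg (A : pform) : pform := PImp A PBot.

Inductive IPC : pform -> Prop :=
| ipc_K  : forall A B, IPC (PImp A (PImp B A))
| ipc_S  : forall A B C,
    IPC (PImp (PImp A (PImp B C)) (PImp (PImp A B) (PImp A C)))
| ipc_andE1 : forall A B, IPC (PImp (PAnd A B) A)
| ipc_andE2 : forall A B, IPC (PImp (PAnd A B) B)
| ipc_andI  : forall A B, IPC (PImp A (PImp B (PAnd A B)))
| ipc_orI1  : forall A B, IPC (PImp A (POr A B))
| ipc_orI2  : forall A B, IPC (PImp B (POr A B))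
| ipc_orE   : forall A B C,
    IPC (PImp (PImp A C) (PImp (PImp B C) (PImp (POr A B) C)))
| ipc_efq   : forall A, IPC (PImp PBot A)
| ipc_mp    : forall A B, IPC A -> IPC (PImp A B) -> IPC B.

Fixpoint peval (v : nat -> bool) (A : pform) : bool :=
  match A with
  | PVar n => v n
  | PBot => false
  | PAnd A B => peval v A && peval v B
  | POr A B => peval v A || peval v B
  | PImp A B => negb (peval v A) || peval v B
  end.

Definition Taut (A : pform) : Prop := forall v, peval v A = true.

Fixpoint psubst (sigma : nat -> pform) (A : pform) : pform :=
  match A with
  | PVar n => sigma n
  | PBot => PBot
  | PAnd A B => PAnd (psubst sigma A) (psubst sigma B)
  | POr A B => POr (psubst sigma A) (psubst sigma B)
  | PImp A B => PImp (psubst sigma A) (psubst sigma B)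
  end.

Record intermediate_logic (L : pform -> Prop) : Prop := {
  il_int   : forall A, IPC A -> L A;
  il_class : forall A, L A -> Taut A;
  il_mp    : forall A B, L A -> L (PImp A B) -> L B;
  il_subst : forall sigma A, L A -> L (psubst sigma A)
}.

Inductive term : Type :=
| Var : nat -> term
| Fn  : nat -> list term -> term
| Eps : nat -> form -> term
| Tau : nat -> form -> term
with form : Type :=
| Pred : nat -> list term -> form
| FBot : form
| FAnd : form -> form -> form
| FOr  : form -> form -> form
| FImp : form -> form -> form.

Definition FNeg (A : form) : form := FImp A FBot.

Fixpoint subst_term (x : nat) (t : term) (u : term) : term :=
  match u with
  | Var y => if Nat.eqb x y then t else Var y
  | Fn f us => Fn f (map (subst_term x t) us)
  | Eps y B => if Nat.eqb x y then Eps y B else Eps y (subst_form x t B)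
  | Tau y B => if Nat.eqb x y then Tau y B else Tau y (subst_form x t B)
  end
with subst_form (x : nat) (t : term) (A : form) : form :=
  match A with
  | Pred p us => Pred p (map (subst_term x t) us)
  | FBot => FBot
  | FAnd A B => FAnd (subst_form x t A) (subst_form x t B)
  | FOr A B => FOr (subst_form x t A) (subst_form x t B)
  | FImp A B => FImp (subst_form x t A) (subst_form x t B)
  end.

Definition term_eq_dec (u v : term) : {u = v} + {u <> v} :=
  excluded_middle_informative (u = v).

Fixpoint repl_term (s e : term) (u : term) : term :=
  if term_eq_dec u e then s else
  match u with
  | Var y => Var y
  | Fn f us => Fn f (map (repl_term s e) us)
  | Eps y B => Eps y (repl_form s e B)
  | Tau y B => Tau y (repl_form s e B)
  end
with repl_form (s e : term) (A : form) : form :=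
  match A with
  | Pred p us => Pred p (map (repl_term s e) us)
  | FBot => FBot
  | FAnd A B => FAnd (repl_form s e A) (repl_form s e B)
  | FOr A B => FOr (repl_form s e A) (repl_form s e B)
  | FImp A B => FImp (repl_form s e A) (repl_form s e B)
  end.

Fixpoint inst (sigma : nat -> form) (A : pform) : form :=
  match A with
  | PVar n => sigma n
  | PBot => FBot
  | PAnd A B => FAnd (inst sigma A) (inst sigma B)
  | POr A B => FOr (inst sigma A) (inst sigma B)
  | PImp A B => FImp (inst sigma A) (inst sigma B)
  end.

Inductive Lder (L : pform -> Prop) (Gamma : form -> Prop) : form -> Prop :=
| ld_hyp : forall F, Gamma F -> Lder L Gamma F
| ld_thm : forall P sigma, L P -> Lder L Gamma (inst sigma P)
| ld_mp  : forall A B, Lder L Gamma A -> Lder L Gamma (FImp A B) ->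
           Lder L Gamma B.

Inductive crit : Type :=
| CEps : nat -> form -> term -> crit
| CTau : nat -> form -> term -> crit.

Definition crit_form (c : crit) : form :=
  match c with
  | CEps x A t => FImp (subst_form x t A) (subst_form x (Eps x A) A)
  | CTau x A t => FImp (subst_form x (Tau x A) A) (subst_form x t A)
  end.

Definition crit_term (c : crit) : term :=
  match c with
  | CEps x A _ => Eps x A
  | CTau x A _ => Tau x A
  end.

(* A derivation pi in eps-tau(L): a finite list of critical formulas
   (those used in pi), its end formula, and a derivation of the end
   formula from these critical formulas. *)
Record derivation (L : pform -> Prop) : Type := {
  crits : list crit;
  endf  : form;
  deriv : Lder L (fun F => exists c, In c crits /\ crit_form c = F) endf
}.

Definition critical_term (L : pform -> Prop) (pi : derivation L) (e : term)
  : Prop := exists c, In c (crits pi) /\ crit_term c = e.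

Definition Gamma_repl (L : pform -> Prop) (pi : derivation L) (e s : term)
  : form -> Prop :=
  fun F => exists c, In c (crits pi) /\ crit_term c <> e /\
                     F = repl_form s e (crit_form c).

Definition big_or (fs : form) (rest : list form) : form :=
  fold_left FOr rest fs.

(* {s_1, ..., s_k} (k >= 1) is a complete e-elimination set *)
Definition complete_elim_set (L : pform -> Prop) (pi : derivation L)
  (e : term) (s1 : term) (ss : list term) : Prop :=
  Lder L (fun F => Gamma_repl pi e s1 F \/ exists s, In s ss /\ Gamma_repl pi e s F)
    (big_or (repl_form s1 e (endf pi)) (map (fun s => repl_form s e (endf pi)) ss)).

Definition has_complete_elim_set (L : pform -> Prop) (pi : derivation L)
  (e : term) : Prop :=
  exists s1 ss, complete_elim_set pi e s1 ss.

From Stdlib Require Import List Arith Lia.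
Import ListNotations.

(* Let e = eps x A (the tau case is dual) have the critical formulas
   A(t_i) -> A(e), and take {e, t_1, ..., t_n} as elimination set.  Weak
   excluded middle gives ~A(t_i) \/ ~~A(t_i) for each i.  If ~A(t_i) holds for
   every i, each critical formula of e is derivable, hence Gamma |- ~D(e).  If
   ~~A(t_j) holds, replacing e by t_j turns each critical formula of e into
   A(t_i') -> A(t_j), whose double negation is derivable; as the end formula is
   a negation, doubly negated hypotheses suffice, so Gamma[t_j/e] |- ~D(t_j).
   Replacing e commutes with instantiating A since e does not occur in A. *)

Fixpoint tsize (u : term) : nat :=
  match u with
  | Var _ => 1
  | Fn _ us => S (list_sum (map tsize us))
  | Eps _ B | Tau _ B => S (fsize B)
  end
with fsize (A : form) : nat :=
  match A with
  | Pred _ us => S (list_sum (map tsize us))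
  | FBot => 1
  | FAnd A B | FOr A B | FImp A B => S (fsize A + fsize B)
  end.

Lemma tsize_le_list_sum u us : In u us -> tsize u <= list_sum (map tsize us).
Proof.
  induction us as [|a us IH]; simpl; [intros []|].
  intros [-> | Hin]; [lia | specialize (IH Hin); lia].
Qed.

Section TermFormInd.
Variables (Pt : term -> Prop) (Pf : form -> Prop).
Hypotheses
  (HVar : forall y, Pt (Var y))
  (HFn : forall f us, Forall Pt us -> Pt (Fn f us))
  (HEps : forall y B, Pf B -> Pt (Eps y B))
  (HTau : forall y B, Pf B -> Pt (Tau y B))
  (HPred : forall p us, Forall Pt us -> Pf (Pred p us))
  (HBot : Pf FBot)
  (HAnd : forall A B, Pf A -> Pf B -> Pf (FAnd A B))
  (HOr : forall A B, Pf A -> Pf B -> Pf (FOr A B))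
  (HImp : forall A B, Pf A -> Pf B -> Pf (FImp A B)).

Fixpoint term_nested_ind (u : term) : Pt u :=
  let fix terms_ind (us : list term) : Forall Pt us :=
    match us with
    | [] => Forall_nil Pt
    | a :: us' => Forall_cons a (term_nested_ind a) (terms_ind us')
    end in
  match u with
  | Var y => HVar y
  | Fn f us => HFn f us (terms_ind us)
  | Eps y B => HEps y B (form_nested_ind B)
  | Tau y B => HTau y B (form_nested_ind B)
  end
with form_nested_ind (A : form) : Pf A :=
  let fix terms_ind (us : list term) : Forall Pt us :=
    match us with
    | [] => Forall_nil Pt
    | a :: us' => Forall_cons a (term_nested_ind a) (terms_ind us')
    end in
  match A with
  | Pred p us => HPred p us (terms_ind us)
  | FBot => HBot
  | FAnd A B => HAnd A B (form_nested_ind A) (form_nested_ind B)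
  | FOr A B => HOr A B (form_nested_ind A) (form_nested_ind B)
  | FImp A B => HImp A B (form_nested_ind A) (form_nested_ind B)
  end.

Lemma term_form_ind : (forall u, Pt u) /\ (forall A, Pf A).
Proof. exact (conj term_nested_ind form_nested_ind). Qed.

End TermFormInd.

Lemma Forall_impl_In (A : Type) (P Q : A -> Prop) (l : list A) :
  Forall (fun a => P a -> Q a) l -> (forall a, In a l -> P a) -> Forall Q l.
Proof. rewrite !Forall_forall; intros HPQ HP a Ha; exact (HPQ a Ha (HP a Ha)). Qed.

Ltac close_by_IH :=
  match goal with
  | |- ?x = ?x => reflexivity
  | |- map _ ?us = ?us =>
      transitivity (map (fun a => a) us); [close_by_IH | apply map_id]
  | IH : Forall _ ?us |- map _ ?us = map _ ?us =>
      apply map_ext_Forall; eapply Forall_impl_In; [exact IH |];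
      intros a Ha; pose proof (tsize_le_list_sum _ _ Ha); simpl; lia
  | IH : _ -> ?l = ?r |- ?l = ?r => apply IH; lia
  end.

Lemma repl_small s e :
  (forall u, tsize u < tsize e -> repl_term s e u = u) /\
  (forall B, fsize B < tsize e -> repl_form s e B = B).
Proof.
  apply term_form_ind; intros; simpl in *;
    try (destruct (term_eq_dec _ e) as [<- | _]; [simpl in *; lia |]);
    f_equal; close_by_IH.
Qed.

Lemma repl_id e :
  (forall u, repl_term e e u = u) /\ (forall B, repl_form e e B = B).
Proof.
  apply term_form_ind; intros; simpl in *;
    try (destruct (term_eq_dec _ e) as [-> | _]; [reflexivity |]);
    f_equal; auto.
  all: rewrite Forall_forall in *; rewrite <- (map_id us) at 2; apply map_ext_in; auto.
Qed.

Lemma repl_subst s x A0 t e :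
  e = Eps x A0 \/ e = Tau x A0 ->
  (forall u, tsize u < tsize e ->
     repl_term s e (subst_term x t u) = subst_term x (repl_term s e t) u) /\
  (forall B, fsize B < tsize e ->
     repl_form s e (subst_form x t B) = subst_form x (repl_term s e t) B).
Proof.
  intro He; apply term_form_ind; intros; simpl in *.
  5-9: rewrite ?map_map; f_equal; close_by_IH.
  3-4: destruct (Nat.eqb_spec x y) as [-> | Hxy];
    [apply (proj1 (repl_small s e)); simpl; lia |];
    simpl; destruct (term_eq_dec _ e) as [<- | _]; [destruct He; congruence |];
    f_equal; close_by_IH.
  - destruct (Nat.eqb_spec x y) as [_ | _]; [reflexivity |].
    simpl; destruct (term_eq_dec (Var y) e) as [<- | _]; [destruct He; discriminate |].
    reflexivity.
  - destruct (term_eq_dec _ e) as [<- | _]; [destruct He; discriminate |].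
    rewrite map_map; f_equal; close_by_IH.
Qed.

Lemma repl_term_at_target s e : repl_term s e e = s.
Proof. destruct e; simpl; destruct (term_eq_dec _ _); congruence. Qed.

Lemma repl_crit_form_Eps s x A t :
  repl_form s (Eps x A) (crit_form (CEps x A t)) =
  FImp (subst_form x (repl_term s (Eps x A) t) A) (subst_form x s A).
Proof.
  simpl; rewrite !(fun t => proj2 (repl_subst s x A t _ (or_introl eq_refl)) A)
    by (simpl; lia).
  rewrite repl_term_at_target; reflexivity.
Qed.

Lemma repl_crit_form_Tau s x A t :
  repl_form s (Tau x A) (crit_form (CTau x A t)) =
  FImp (subst_form x s A) (subst_form x (repl_term s (Tau x A) t) A).
Proof.
  simpl; rewrite !(fun t => proj2 (repl_subst s x A t _ (or_intror eq_refl)) A)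
    by (simpl; lia).
  rewrite repl_term_at_target; reflexivity.
Qed.

Definition crit_arg (c : crit) : term :=
  match c with CEps _ _ t | CTau _ _ t => t end.

Lemma crit_term_Eps c x A : crit_term c = Eps x A -> c = CEps x A (crit_arg c).
Proof. destruct c; simpl; congruence. Qed.

Lemma crit_term_Tau c x A : crit_term c = Tau x A -> c = CTau x A (crit_arg c).
Proof. destruct c; simpl; congruence. Qed.

Lemma repl_inst s e sigma P :
  repl_form s e (inst sigma P) = inst (fun n => repl_form s e (sigma n)) P.
Proof. induction P; simpl; congruence. Qed.

Lemma Lder_repl L K F s e :
  Lder L K F ->
  Lder L (fun G => exists2 F0, K F0 & G = repl_form s e F0) (repl_form s e F).
Proof.
  induction 1 as [F HF | P sigma HP | A B _ IHA _ IHAB].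
  - apply ld_hyp; exists F; auto.
  - rewrite repl_inst; apply ld_thm, HP.
  - exact (ld_mp IHA IHAB).
Qed.

Definition add_hyp (K : form -> Prop) (A : form) : form -> Prop :=
  fun F => K F \/ F = A.

Section Derivability.

Context {L : pform -> Prop}.

Lemma Lder_weaken {K1 K2 F} :
  Lder L K1 F -> (forall G, K1 G -> K2 G) -> Lder L K2 F.
Proof.
  intros HF Hsub; induction HF as [F HF | P sigma HP | A B _ IHA _ IHAB].
  - apply ld_hyp, Hsub, HF.
  - apply ld_thm, HP.
  - exact (ld_mp IHA IHAB).
Qed.

Lemma Lder_add_hyp {K A F} : Lder L K F -> Lder L (add_hyp K A) F.
Proof. intro HF; apply (Lder_weaken HF); intros G HG; left; exact HG. Qed.

Lemma Lder_added_hyp {K A} : Lder L (add_hyp K A) A.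
Proof. apply ld_hyp; right; reflexivity. Qed.

Hypothesis HL : intermediate_logic L.

Lemma Lder_IPC {K P} sigma : IPC P -> Lder L K (inst sigma P).
Proof. intro HP; apply ld_thm, (il_int HL), HP. Qed.

Section HilbertAxioms.

Context {K : form -> Prop}.

Lemma Lder_axK {X Y} : Lder L K (FImp X (FImp Y X)).
Proof. exact (Lder_IPC (fun n => nth n [X; Y] FBot) (ipc_K (PVar 0) (PVar 1))). Qed.

Lemma Lder_axS {X Y Z} :
  Lder L K (FImp (FImp X (FImp Y Z)) (FImp (FImp X Y) (FImp X Z))).
Proof.
  exact (Lder_IPC (fun n => nth n [X; Y; Z] FBot) (ipc_S (PVar 0) (PVar 1) (PVar 2))).
Qed.

Lemma Lder_axOrI1 {X Y} : Lder L K (FImp X (FOr X Y)).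
Proof. exact (Lder_IPC (fun n => nth n [X; Y] FBot) (ipc_orI1 (PVar 0) (PVar 1))). Qed.

Lemma Lder_axOrI2 {X Y} : Lder L K (FImp Y (FOr X Y)).
Proof. exact (Lder_IPC (fun n => nth n [X; Y] FBot) (ipc_orI2 (PVar 0) (PVar 1))). Qed.

Lemma Lder_axOrE {X Y Z} :
  Lder L K (FImp (FImp X Z) (FImp (FImp Y Z) (FImp (FOr X Y) Z))).
Proof.
  exact (Lder_IPC (fun n => nth n [X; Y; Z] FBot) (ipc_orE (PVar 0) (PVar 1) (PVar 2))).
Qed.

Lemma Lder_axEfq {X} : Lder L K (FImp FBot X).
Proof. exact (Lder_IPC (fun _ => X) (ipc_efq (PVar 0))). Qed.

End HilbertAxioms.

Lemma Lder_imp_intro {K A B} : Lder L (add_hyp K A) B -> Lder L K (FImp A B).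
Proof.
  induction 1 as [F [HF | ->] | P sigma HP | F G _ IHF _ IHFG].
  - exact (ld_mp (ld_hyp _ _ _ HF) Lder_axK).
  - exact (ld_mp (Lder_axK (Y := A)) (ld_mp Lder_axK Lder_axS)).
  - exact (ld_mp (ld_thm _ _ _ _ HP) Lder_axK).
  - exact (ld_mp IHF (ld_mp IHFG Lder_axS)).
Qed.

Lemma Lder_nn_intro {K A} : Lder L K A -> Lder L K (FNeg (FNeg A)).
Proof.
  intro HA; apply Lder_imp_intro.
  exact (ld_mp (Lder_add_hyp HA) Lder_added_hyp).
Qed.

Lemma Lder_nn_imp_of_neg {K X} Y :
  Lder L K (FNeg X) -> Lder L K (FNeg (FNeg (FImp X Y))).
Proof.
  intro HnX; apply Lder_nn_intro, Lder_imp_intro.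
  exact (ld_mp (ld_mp Lder_added_hyp (Lder_add_hyp HnX)) Lder_axEfq).
Qed.

Lemma Lder_nn_imp_of_nn {K Y} X :
  Lder L K (FNeg (FNeg Y)) -> Lder L K (FNeg (FNeg (FImp X Y))).
Proof.
  intro HnnY; apply Lder_imp_intro.
  refine (ld_mp _ (Lder_add_hyp HnnY)).
  apply Lder_imp_intro.
  refine (ld_mp _ (Lder_add_hyp Lder_added_hyp)).
  exact (ld_mp Lder_added_hyp Lder_axK).
Qed.

Lemma Lder_neg_of_nn_hyp {K H Z} :
  Lder L K (FImp H (FNeg Z)) -> Lder L K (FNeg (FNeg H)) -> Lder L K (FNeg Z).
Proof.
  intros HHZ HnnH; apply Lder_imp_intro.
  refine (ld_mp _ (Lder_add_hyp HnnH)).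
  apply Lder_imp_intro.
  refine (ld_mp (Lder_add_hyp Lder_added_hyp) _).
  exact (ld_mp Lder_added_hyp (Lder_add_hyp (Lder_add_hyp HHZ))).
Qed.

(* Negations are stable under double negation, so the hypotheses of a derivation
   of a negation may be weakened to their double negations. *)
Lemma Lder_neg_of_nn_hyps Hs K Z :
  Lder L (fun F => K F \/ In F Hs) (FNeg Z) ->
  (forall H, In H Hs -> Lder L K (FNeg (FNeg H))) ->
  Lder L K (FNeg Z).
Proof.
  revert K; induction Hs as [| H Hs IH]; intros K HZ HnnHs.
  - apply (Lder_weaken HZ); intros F [HF | []]; exact HF.
  - apply (Lder_neg_of_nn_hyp (H := H)); [apply Lder_imp_intro, IH | apply HnnHs; now left].
    + apply (Lder_weaken HZ); intros F [HF | [<- | HF]]; unfold add_hyp; auto.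
    + intros H' HH'; apply Lder_add_hyp, HnnHs; now right.
Qed.

Lemma Lder_or_elim {K X Y C} :
  Lder L K (FOr X Y) -> Lder L (add_hyp K X) C -> Lder L (add_hyp K Y) C ->
  Lder L K C.
Proof.
  intros HXY HX HY.
  exact (ld_mp HXY (ld_mp (Lder_imp_intro HY) (ld_mp (Lder_imp_intro HX) Lder_axOrE))).
Qed.

Lemma Lder_or_comm {K X Y} : Lder L K (FOr X Y) -> Lder L K (FOr Y X).
Proof.
  intro HXY; apply (Lder_or_elim HXY).
  - exact (ld_mp Lder_added_hyp Lder_axOrI2).
  - exact (ld_mp Lder_added_hyp Lder_axOrI1).
Qed.

Lemma Lder_big_or_intro K X f rest :
  In X (f :: rest) -> Lder L K X -> Lder L K (big_or f rest).
Proof.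
  revert f X; induction rest as [| g rest IH]; intros f X HX HdX; simpl in *.
  - destruct HX as [-> | []]; exact HdX.
  - destruct HX as [-> | [-> | HX]].
    + exact (IH _ _ (or_introl eq_refl) (ld_mp HdX Lder_axOrI1)).
    + exact (IH _ _ (or_introl eq_refl) (ld_mp HdX Lder_axOrI2)).
    + exact (IH _ _ (or_intror HX) HdX).
Qed.

Lemma Lder_cases_list (P Q : term -> form) l K C :
  (forall u, In u l -> Lder L K (FOr (P u) (Q u))) ->
  Lder L (fun F => K F \/ exists2 u, In u l & F = P u) C ->
  (forall u, In u l -> Lder L (add_hyp K (Q u)) C) ->
  Lder L K C.
Proof.
  revert K; induction l as [| a l IH]; intros K HPQ HallP HQ.
  - apply (Lder_weaken HallP); intros F [HF | [u []]]; exact HF.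
  - apply (Lder_or_elim (HPQ a (or_introl eq_refl))); [| exact (HQ a (or_introl eq_refl))].
    apply IH.
    + intros u Hu; apply Lder_add_hyp, HPQ; now right.
    + apply (Lder_weaken HallP); intros F [HF | [u [<- | Hu] ->]]; unfold add_hyp.
      * auto.
      * auto.
      * right; exists u; auto.
    + intros u Hu; apply (Lder_weaken (HQ u (or_intror Hu))).
      intros F [HF | ->]; unfold add_hyp; auto.
Qed.

Hypothesis Hwem : forall A : pform, L (POr (PNeg A) (PNeg (PNeg A))).

Lemma Lder_wem K X : Lder L K (FOr (FNeg X) (FNeg (FNeg X))).
Proof. exact (ld_thm _ K _ (fun _ => X) (Hwem (PVar 0))). Qed.

End Derivability.

Section Elimination.

Context {L : pform -> Prop} (HL : intermediate_logic L).
Variables (pi : derivation L) (e : term) (D : form).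
Hypothesis Hend : endf pi = FNeg D.

Lemma Lder_repl_endf_of_nn_crits s K :
  (forall F, Gamma_repl pi e s F -> K F) ->
  (forall c, In c (crits pi) -> crit_term c = e ->
     Lder L K (FNeg (FNeg (repl_form s e (crit_form c))))) ->
  Lder L K (repl_form s e (endf pi)).
Proof.
  intros HGamma Hcrits_e.
  pose proof (Lder_repl _ _ _ s e (deriv pi)) as Hrepl; rewrite Hend in Hrepl |- *.
  apply (Lder_neg_of_nn_hyps HL (map (fun c => repl_form s e (crit_form c)) (crits pi))).
  - apply (Lder_weaken Hrepl).
    intros F [F0 [c [Hc <-]] ->]; right.
    exact (in_map (fun c => repl_form s e (crit_form c)) _ _ Hc).
  - intros H Hin; apply in_map_iff in Hin as [c [<- Hc]].
    destruct (term_eq_dec (crit_term c) e) as [Hce | Hce]; [now apply Hcrits_e |].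
    apply (Lder_nn_intro HL), ld_hyp, HGamma; exists c; auto.
Qed.

(* [P] on all arguments lets [e] be kept; [Q u] lets [e] be replaced by [u]. *)
Lemma complete_elim_set_of_cases (P Q : term -> form) l :
  (forall K u, Lder L K (FOr (P u) (Q u))) ->
  (forall c, In c (crits pi) -> crit_term c = e -> In (crit_arg c) l) ->
  (forall c K, In c (crits pi) -> crit_term c = e ->
     Lder L K (P (crit_arg c)) -> Lder L K (FNeg (FNeg (crit_form c)))) ->
  (forall c u K, In c (crits pi) -> crit_term c = e ->
     Lder L K (Q u) -> Lder L K (FNeg (FNeg (repl_form u e (crit_form c))))) ->
  complete_elim_set pi e e l.
Proof.
  intros Hcases Hargs Hkeep Hmove; unfold complete_elim_set.
  apply (Lder_cases_list HL P Q l).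
  - intros u _; apply Hcases.
  - apply (Lder_big_or_intro HL _ (repl_form e e (endf pi))); [now left |].
    apply Lder_repl_endf_of_nn_crits.
    + intros F HF; left; left; exact HF.
    + intros c Hc Hce; rewrite (proj2 (repl_id e)).
      apply (Hkeep c _ Hc Hce), ld_hyp; right; exists (crit_arg c); auto.
  - intros u Hu.
    apply (Lder_big_or_intro HL _ (repl_form u e (endf pi))).
    { right; apply (in_map (fun s => repl_form s e (endf pi))), Hu. }
    apply Lder_repl_endf_of_nn_crits.
    + intros F HF; left; right; exists u; auto.
    + intros c Hc Hce; apply (Hmove c u _ Hc Hce), Lder_added_hyp.
Qed.

End Elimination.

Section WeakExcludedMiddle.

Context {L : pform -> Prop} (HL : intermediate_logic L).
Hypothesis Hwem : forall A : pform, L (POr (PNeg A) (PNeg (PNeg A))).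
Variables (pi : derivation L) (D : form).
Hypothesis Hend : endf pi = FNeg D.

Lemma complete_elim_set_Eps x A l :
  (forall c, In c (crits pi) -> crit_term c = Eps x A -> In (crit_arg c) l) ->
  complete_elim_set pi (Eps x A) (Eps x A) l.
Proof.
  intro Hargs.
  apply (complete_elim_set_of_cases HL pi _ D Hend
           (fun u => FNeg (subst_form x u A)) (fun u => FNeg (FNeg (subst_form x u A)))
           l (fun K u => Lder_wem Hwem K _) Hargs).
  - intros c K _ Hce HnA; rewrite (crit_term_Eps c x A Hce).
    exact (Lder_nn_imp_of_neg HL _ HnA).
  - intros c u K _ Hce HnnA; rewrite (crit_term_Eps c x A Hce), repl_crit_form_Eps.
    exact (Lder_nn_imp_of_nn HL _ HnnA).
Qed.

Lemma complete_elim_set_Tau x A l :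
  (forall c, In c (crits pi) -> crit_term c = Tau x A -> In (crit_arg c) l) ->
  complete_elim_set pi (Tau x A) (Tau x A) l.
Proof.
  intro Hargs.
  apply (complete_elim_set_of_cases HL pi _ D Hend
           (fun u => FNeg (FNeg (subst_form x u A))) (fun u => FNeg (subst_form x u A))
           l (fun K u => Lder_or_comm HL (Lder_wem Hwem K _)) Hargs).
  - intros c K _ Hce HnnA; rewrite (crit_term_Tau c x A Hce).
    exact (Lder_nn_imp_of_nn HL _ HnnA).
  - intros c u K _ Hce HnA; rewrite (crit_term_Tau c x A Hce), repl_crit_form_Tau.
    exact (Lder_nn_imp_of_neg HL _ HnA).
Qed.

End WeakExcludedMiddle.

Theorem mainTheorem14 (L : pform -> Prop) (HL : intermediate_logic L)
  (Hwem : forall A : pform, L (POr (PNeg A) (PNeg (PNeg A))))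
  (pi : derivation L) (D : form) (Hend : endf pi = FNeg D)
  (e : term) (He : critical_term pi e) :
  has_complete_elim_set pi e.
Proof.
  destruct He as [c [_ <-]].
  (* Arguments of critical formulas of other terms are harmless extra candidates. *)
  exists (crit_term c), (map crit_arg (crits pi)).
  destruct c as [x A t | x A t]; simpl.
  - apply (complete_elim_set_Eps HL Hwem pi D Hend).
    intros c Hc _; exact (in_map crit_arg _ _ Hc).
  - apply (complete_elim_set_Tau HL Hwem pi D Hend).
    intros c Hc _; exact (in_map crit_arg _ _ Hc).
Qed.
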